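(* Let $A=B^\top B+E$ where $B\in\mathbb{R}^{n\times d}$, $E\in\mathbb{R}^{d\times d}$ is symmetric with $\max_{i,j}|E_{ij}|\le a$, and $B^\top B$ has a $k$-sparse unit eigenvector $v$ corresponding to its largest eigenvalue $\lambda_1=\lambda_1(B^\top B)$. Let $\lambda_2=\lambda_2(B^\top B)$ be the second largest eigenvalue and assume $\lambda_1-\lambda_2>0$. Let $W^*$ be an optimal solution to $\max\,\mathrm{tr}(AW)$ s.t. $\mathrm{tr}(W)=1$, $\sum_{i,j}|W_{ij}|\le k$, $W\succeq0$. Then $$\|W^*-vv^\top\|_F\le\frac{2ak}{\lambda_1-\lambda_2}+\sqrt{\frac{2ak}{\lambda_1-\lambda_2}}.$$
   Context: A vector is $k$-sparse if it has at most $k$ nonzero entries; $\|\cdot\|_F$ is the Frobenius norm. *)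

From mathcomp Require Import all_boot all_order all_algebra.
Set Implicit Arguments. Unset Strict Implicit. Unset Printing Implicit Defensive.
Import Order.TTheory GRing.Theory Num.Theory.
Local Open Scope ring_scope.

Definition frob (R : rcfType) (m n : nat) (X : 'M[R]_(m, n)) : R :=
  Num.sqrt (\sum_(i < m) \sum_(j < n) X i j ^+ 2).

Definition sqnorm (R : rcfType) (d : nat) (v : 'cV[R]_d) : R :=
  \sum_(i < d) v i 0 ^+ 2.

Definition ksparse (R : rcfType) (d : nat) (k : nat) (v : 'cV[R]_d) : Prop :=
  (#|[set i : 'I_d | v i ord0 != 0%R]| <= k)%N.

Definition symmx (R : rcfType) (d : nat) (M : 'M[R]_d) : Prop := M^T = M.

Definition psd (R : rcfType) (d : nat) (W : 'M[R]_d) : Prop :=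
  symmx W /\ forall x : 'cV[R]_d, 0 <= (x^T *m W *m x) 0 0.

(* s is the list of eigenvalues of M, with multiplicity, in nonincreasing order:
   s_0 = lambda_1 >= s_1 = lambda_2 >= ... *)
Definition sorted_eigenvalues (R : rcfType) (d : nat) (M : 'M[R]_d) (s : seq R) : Prop :=
  char_poly M = \prod_(x <- s) ('X - x%:P) /\ sorted (fun x y => y <= x) s.

Definition feasible (R : rcfType) (d : nat) (k : nat) (W : 'M[R]_d) : Prop :=
  \tr W = 1 /\ \sum_(i < d) \sum_(j < d) `|W i j| <= k%:R /\ psd W.

Definition optimal (R : rcfType) (d : nat) (k : nat) (A W : 'M[R]_d) : Prop :=
  feasible k W /\ forall W' : 'M[R]_d, feasible k W' -> \tr (A *m W') <= \tr (A *m W).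

(* Put alpha = v^T W v.  Diagonalising M = B^T B, whose top eigenvalue
   lambda_1 is simple with eigenvector v, gives tr(M W) <= lambda_1 alpha +
   lambda_2 (1 - alpha) for every psd W of unit trace.  As v v^T is feasible,
   optimality of W then yields (lambda_1 - lambda_2)(1 - alpha) <= tr(E D) <=
   a |D|_1 for D = W - v v^T.  Off the support S x S of v v^T, with #|S| <= k,
   D coincides with W, so Cauchy-Schwarz on S x S gives |D|_1 <= k + k |D|_F;
   and |W|_F <= tr W = 1 gives |D|_F^2 <= 2 (1 - alpha).  Hence f = |D|_F
   satisfies f^2 <= delta (1 + f) with delta = 2ak / (lambda_1 - lambda_2),
   i.e. f <= delta + sqrt delta. *)

From mathcomp Require Import all_boot all_order all_algebra.
From mathcomp Require Import complex spectral ring lra.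
Set Implicit Arguments.
Unset Strict Implicit.
Unset Printing Implicit Defensive.
Import Order.TTheory GRing.Theory Num.Theory Num.Def.
Local Open Scope ring_scope.

Definition mxnorm1 (R : numDomainType) m n (X : 'M[R]_(m, n)) : R :=
  \sum_i \sum_j `|X i j|.

Definition sqfrob (R : pzSemiRingType) m n (X : 'M[R]_(m, n)) : R :=
  \sum_i \sum_j X i j ^+ 2.

Lemma sqr_frob (R : rcfType) m n (X : 'M[R]_(m, n)) : frob X ^+ 2 = sqfrob X.
Proof.
by rewrite sqr_sqrtr // sumr_ge0 // => i _; rewrite sumr_ge0 // => j _; rewrite sqr_ge0.
Qed.

Lemma sqr_sum_norm_le_card (R : realFieldType) (I : finType) (A : {pred I})
    (u : I -> R) :
  (\sum_(i in A) `|u i|) ^+ 2 <= #|A|%:R * \sum_(i in A) u i ^+ 2.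
Proof.
have amgm i j : `|u i| * `|u j| <= (u i ^+ 2 + u j ^+ 2) / 2.
  rewrite -[u i ^+ 2]real_normK ?num_real // -[u j ^+ 2]real_normK ?num_real //.
  by have := sqr_ge0 (`|u i| - `|u j|); lra.
rewrite expr2 mulr_suml.
apply: le_trans (_ : _ <= \sum_(i in A) \sum_(j in A) (u i ^+ 2 + u j ^+ 2) / 2) _.
  by apply: ler_sum => i _; rewrite mulr_sumr; apply: ler_sum => j _.
under eq_bigr do rewrite -mulr_suml big_split /= sumr_const.
rewrite -mulr_suml big_split /= sumr_const sumrMnl -mulr_natl.
by set S := \sum_(i in A) _; lra.
Qed.

Lemma sumr_cond_le (R : numDomainType) (I : finType) (P : pred I) (F : I -> R) :
  (forall i, 0 <= F i) -> \sum_(i | P i) F i <= \sum_i F i.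
Proof. by move=> F_ge0; rewrite [X in _ <= X](bigID P) /= lerDl sumr_ge0. Qed.

Section PsdMatrices.
Variables (R : rcfType) (d : nat).
Implicit Types (W : 'M[R]_d) (v : 'cV[R]_d).

Lemma psd_form_pair W i j p q : psd W ->
  0 <= p ^+ 2 * W i i + 2 * p * q * W i j + q ^+ 2 * W j j.
Proof.
move=> [W_sym W_ge0]; have := W_ge0 (p *: delta_mx i 0 + q *: delta_mx j 0).
have Wji : W j i = W i j by rewrite -[in LHS]W_sym mxE.
have form (a b : 'I_d) :
    (delta_mx a 0 : 'cV[R]_d)^T *m W *m delta_mx b 0 = (W a b)%:M.
  by apply/matrixP => x y; rewrite !ord1 trmx_delta -rowE -colE !mxE eqxx.
rewrite !linearD /= !linearZ /= !mulmxDl -!scalemxAl !form !mxE Wji /= !mulr1n.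
by move=> Q; lra.
Qed.

Lemma psd_entry_sqr_le W i j : psd W -> W i j ^+ 2 <= W i i * W j j.
Proof.
move=> W_psd; have Q p q := psd_form_pair i j p q W_psd.
set a := W i i in Q *; set b := W i j in Q *; set c := W j j in Q *.
have a_ge0 : 0 <= a by have := Q 1 0; nra.
have c_ge0 : 0 <= c by have := Q 0 1; nra.
have [a_gt0 | a_le0] := ltP 0 a.
  by have := Q b (- a); rewrite -subr_ge0; nra.
have a0 : a = 0 by apply/le_anti; rewrite a_le0 a_ge0.
have [c_gt0 | c_le0] := ltP 0 c.
  by have := Q c (- b); nra.
have c0 : c = 0 by apply/le_anti; rewrite c_le0 c_ge0.
by have := Q 1 (- b); rewrite a0 c0; nra.
Qed.

Lemma sqfrob_le_sqr_mxtrace W : psd W -> sqfrob W <= \tr W ^+ 2.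
Proof.
move=> W_psd; rewrite expr2 /mxtrace mulr_suml.
apply: ler_sum => i _; rewrite mulr_sumr; apply: ler_sum => j _.
exact: psd_entry_sqr_le.
Qed.

Lemma outer_mxE v i j : (v *m v^T) i j = v i 0 * v j 0.
Proof. by rewrite !mxE big_ord1 !mxE. Qed.

Lemma psd_outer v : psd (v *m v^T).
Proof.
split=> [|x]; first by rewrite /symmx trmx_mul trmxK.
rewrite mulmxA -mulmxA -[v^T *m x]trmxK trmx_mul trmxK.
by move: (x^T *m v) => y; rewrite mxE big_ord1 mxE -expr2 sqr_ge0.
Qed.

Lemma mxtrace_mul_outer (A : 'M[R]_d) v :
  \tr (A *m (v *m v^T)) = (v^T *m A *m v) 0 0.
Proof. by rewrite mulmxA mxtrace_mulC mulmxA trace_mx11. Qed.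

Lemma sqnormE v : sqnorm v = (v^T *m v) 0 0.
Proof. by rewrite mxE; apply: eq_bigr => i _; rewrite mxE expr2. Qed.

Lemma mxtrace_outer v : \tr (v *m v^T) = sqnorm v.
Proof. by rewrite -[v *m _]mul1mx mxtrace_mul_outer mulmx1 sqnormE. Qed.

Lemma sqfrob_sub_outer_le W v : psd W -> \tr W = 1 -> sqnorm v = 1 ->
  sqfrob (W - v *m v^T) <= 2 * (1 - (v^T *m W *m v) 0 0).
Proof.
move=> W_psd trW v_unit.
have W_fro : sqfrob W <= 1 by rewrite -(expr1n _ 2) -trW sqfrob_le_sqr_mxtrace.
have formE : (v^T *m W *m v) 0 0 = \sum_i \sum_j W i j * (v i 0 * v j 0).
  rewrite mxE exchange_big; apply: eq_bigr => j _ /=.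
  rewrite mxE mulr_suml; apply: eq_bigr => i _; rewrite mxE; ring.
have outer_fro : sqfrob (v *m v^T) = 1.
  rewrite -(expr1n _ 2) -v_unit expr2 /sqfrob mulr_suml; apply: eq_bigr => i _.
  by rewrite mulr_sumr; apply: eq_bigr => j _; rewrite outer_mxE; ring.
have -> : sqfrob (W - v *m v^T) =
    sqfrob W - 2 * (v^T *m W *m v) 0 0 + sqfrob (v *m v^T).
  rewrite formE mulr_sumr -sumrB -big_split /=; apply: eq_bigr => i _.
  rewrite mulr_sumr -sumrB -big_split /=; apply: eq_bigr => j _.
  by rewrite !mxE big_ord1 !mxE; ring.
by rewrite outer_fro; lra.
Qed.

End PsdMatrices.

Section SparseOuter.
Variables (R : rcfType) (d k : nat) (v : 'cV[R]_d).
Hypothesis v_sparse : ksparse k v.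

Let S := [set i : 'I_d | v i 0 != 0].

Let card_S : #|S|%:R <= k%:R :> R.
Proof. by rewrite ler_nat. Qed.

Let v_supp i : i \notin S -> v i 0 = 0.
Proof. by rewrite inE negbK => /eqP. Qed.

Lemma mxnorm1_outer_le : sqnorm v = 1 -> mxnorm1 (v *m v^T) <= k%:R.
Proof.
move=> v_unit.
have -> : mxnorm1 (v *m v^T) = (\sum_(i in S) `|v i 0|) ^+ 2.
  rewrite big_rmcond => [|i /v_supp ->]; last by rewrite normr0.
  rewrite expr2 mulr_suml; apply: eq_bigr => i _; rewrite mulr_sumr.
  by apply: eq_bigr => j _; rewrite outer_mxE normrM.
apply: le_trans (sqr_sum_norm_le_card _ _) _.
rewrite big_rmcond => [|i /v_supp ->]; last by rewrite expr0n.
by rewrite -/(sqnorm v) v_unit mulr1 card_S.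
Qed.

Lemma feasible_outer : sqnorm v = 1 -> feasible k (v *m v^T).
Proof.
move=> v_unit; split; first by rewrite mxtrace_outer.
by split; [exact: mxnorm1_outer_le | exact: psd_outer].
Qed.

Lemma mxnorm1_sub_outer_le (W : 'M[R]_d) : mxnorm1 W <= k%:R ->
  mxnorm1 (W - v *m v^T) <= k%:R + k%:R * frob (W - v *m v^T).
Proof.
move=> W_l1; set D := W - v *m v^T.
have D_off p : p \notin setX S S -> D p.1 p.2 = W p.1 p.2.
  case: p => i j; rewrite inE negb_and /= !mxE big_ord1 !mxE.
  by case/orP => /v_supp ->; rewrite ?mulr0 ?mul0r subr0.
have D_on : \sum_(p in setX S S) `|D p.1 p.2| <= k%:R * frob D.
  apply: (@le_trans _ _ (#|S|%:R * frob D)); last first.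
    by rewrite ler_wpM2r ?sqrtr_ge0 ?card_S.
  rewrite -(@ler_pXn2r _ 2) ?nnegrE ?sumr_ge0 ?mulr_ge0 ?sqrtr_ge0 //.
  apply: le_trans (sqr_sum_norm_le_card _ _) _.
  rewrite cardsX natrM exprMn sqr_sqrtr ?sumr_ge0 // => [|i _]; last first.
    by rewrite sumr_ge0 // => j _; rewrite sqr_ge0.
  rewrite -expr2 ler_wpM2l ?sqr_ge0 // /sqfrob pair_bigA /=.
  by apply: sumr_cond_le => p; rewrite sqr_ge0.
have D_off_sum : \sum_(p | p \notin setX S S) `|D p.1 p.2| <= k%:R.
  apply: le_trans W_l1; rewrite /mxnorm1 pair_bigA /=.
  under eq_bigr => p /D_off -> do [].
  by apply: sumr_cond_le => p.
by rewrite /mxnorm1 pair_bigA /= (bigID [in setX S S]) /= addrC lerD.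
Qed.

End SparseOuter.

Section NonincreasingSeq.
Variables (R : numDomainType) (s : seq R).
Hypothesis s_sorted : sorted (fun x y => y <= x) s.

Lemma sorted_nth_le_second i : (0 < i < size s)%N -> s`_i <= s`_1.
Proof.
case/andP=> i_gt0 i_lt.
have ge_trans : transitive (fun x y : R => y <= x).
  by move=> x y z yx zy; apply: le_trans zy yx.
apply: (sorted_leq_nth ge_trans (@lexx _ _) 0 s_sorted) => //.
by rewrite inE (leq_ltn_trans i_gt0 i_lt).
Qed.

Lemma mem_sorted_le_second y : y \in s -> y != s`_0 -> y <= s`_1.
Proof.
move=> ys; rewrite -(nth_index 0 ys); case: (index y s) (index_mem y s) => [|i] i_lt.
  by rewrite eqxx.
by move=> _; apply: sorted_nth_le_second; rewrite i_lt.
Qed.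

Lemma count_head_sorted : s`_1 < s`_0 -> count_mem s`_0 s = 1%N.
Proof.
case: s s_sorted sorted_nth_le_second => [|x t] _ le_second; first by rewrite ltxx.
move=> gap /=; rewrite eqxx add1n; congr _.+1.
apply/eqP; rewrite -leqn0 leqNgt -has_count; apply/hasPn => y yt.
have y_le : y <= t`_0.
  by rewrite -[y](nth_index 0 yt) (le_second (index y t).+1) //= ltnS index_mem.
by rewrite /= lt_eqF // (le_lt_trans y_le).
Qed.

End NonincreasingSeq.

Section Complexification.
Variable R : rcfType.
Local Open Scope sesquilinear_scope.
Local Notation toC := (real_complex R).
Local Notation MtoC := (map_mx toC).

Lemma conjC_toC (x : R) : conjC (toC x) = toC x.
Proof. exact: conjc_real. Qed.

Lemma trmxC_MtoC m n (A : 'M[R]_(m, n)) : (MtoC A)^t* = MtoC A^T.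
Proof. by apply/matrixP => i j; rewrite !mxE conjC_toC. Qed.

Lemma mxtrace_MtoC n (A : 'M[R]_n) : \tr (MtoC A) = toC (\tr A).
Proof. by rewrite /mxtrace rmorph_sum; apply: eq_bigr => i _; rewrite mxE. Qed.

(* Writing p = a + i b with a, b real, the cross terms cancel by symmetry of W
   and the form equals a W a^T + b W b^T. *)
Lemma psd_form_MtoC_ge0 d (W : 'M[R]_d) (p : 'rV[R[i]]_d) :
  psd W -> 0 <= (p *m MtoC W *m p^t*) 0 0.
Proof.
move=> [WT W_ge0].
set a := map_mx (@complex.Re R) p; set b := map_mx (@complex.Im R) p.
have pE : p = MtoC a + 'i%C *: MtoC b.
  by apply/matrixP => i j; rewrite !mxE; case: (p i j) => x y; simpc.
have pC : p^t* = MtoC a^T - 'i%C *: MtoC b^T.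
  by apply/matrixP => i j; rewrite !mxE; case: (p j i) => x y; simpc.
have form_sym (x y : 'rV[R]_d) : (x *m W *m y^T) 0 0 = (y *m W *m x^T) 0 0.
  by rewrite -[x *m W *m y^T]trmxK mxE !trmx_mul trmxK WT mulmxA.
have form_ge0 (x : 'rV[R]_d) : 0 <= (x *m W *m x^T) 0 0.
  by have := W_ge0 x^T; rewrite trmxK.
rewrite [p in p *m _ *m _]pE pC.
rewrite mulmxDl mulmxBr !mulmxDl -!scalemxAl -!scalemxAr -!map_mxM.
have -> : b *m W *m a^T = a *m W *m b^T.
  by apply/matrixP => i j; rewrite !ord1 form_sym.
have := form_ge0 a; have := form_ge0 b.
move: (a *m W *m a^T) (a *m W *m b^T) (b *m W *m b^T) => X U Y Y_ge0 X_ge0.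
rewrite !mxE mulrA -expr2 sqr_i.
rewrite (_ : forall x u y : R[i], x + 'i%C * u - ('i%C * u + -1 * y) = x + y).
  by rewrite -rmorphD ler0c addr_ge0.
by move=> x u y; ring.
Qed.

Lemma psd_conj_MtoC_diag_ge0 d (W : 'M[R]_d) (P : 'M[R[i]]_d) k :
  psd W -> 0 <= (P *m MtoC W *m P^t*) k k.
Proof.
move=> W_psd; have -> : (P *m MtoC W *m P^t*) k k = (row k P *m MtoC W *m (row k P)^t*) 0 0.
  by rewrite -!row_mul !mxE; apply: eq_bigr => j _; rewrite !mxE.
exact: psd_form_MtoC_ge0.
Qed.

End Complexification.

Lemma form_single_support (C : numClosedFieldType) d (w : 'cV[C]_d) k0 (Y : 'M_d) :
    (forall k, k != k0 -> w k 0 = 0) ->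
  (w^t* *m Y *m w)%sesqui 0 0 = Y k0 k0 * (w^t* *m w)%sesqui 0 0.
Proof.
move=> w_k; have mul_w (x : 'rV_d) : (x *m w) 0 0 = x 0 k0 * w k0 0.
  by rewrite mxE (bigD1 k0) //= big1 ?addr0 // => j jk0; rewrite w_k ?mulr0.
rewrite !mul_w mxE (bigD1 k0) //= big1 ?addr0 => [|j jk0]; last first.
  by rewrite !mxE w_k ?conjC0 ?mul0r.
by rewrite mulrAC [RHS]mulrC.
Qed.

Lemma char_poly_similar (F : comNzRingType) n (A Q Q' : 'M[F]_n) :
  Q' *m Q = 1%:M -> char_poly (Q' *m A *m Q) = char_poly A.
Proof.
move=> QQ'.
have charE : char_poly_mx (Q' *m A *m Q) =
    map_mx polyC Q' *m char_poly_mx A *m map_mx polyC Q.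
  rewrite /char_poly_mx mulmxBr mulmxBl -!map_mxM mul_mx_scalar -scalemxAl.
  by rewrite -map_mxM QQ' map_mx1 scalemx1.
rewrite /char_poly charE !det_mulmx mulrC mulrA -det_mulmx -map_mxM.
by rewrite mulmx1C // map_mx1 det1 mul1r.
Qed.

(* MathComp's spectral theorem needs an algebraically closed field, so M is
   diagonalised over R[i] as M = P^* diag(D) P with P unitary. *)
Section TopEigenvector.
Variables (R : rcfType) (d : nat) (M : 'M[R]_d) (s : seq R) (v : 'cV[R]_d).
Hypotheses (M_sym : M^T = M) (M_eig : sorted_eigenvalues M s)
  (Mv : M *m v = s`_0 *: v) (v_unit : sqnorm v = 1) (gap : s`_1 < s`_0).
Local Open Scope sesquilinear_scope.
Local Notation toC := (real_complex R).
Local Notation MtoC := (map_mx toC).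

Let P := spectralmx (MtoC M).
Let D := spectral_diag (MtoC M).

Let PPC : P *m P^t* = 1%:M.
Proof. exact/unitarymxP/spectral_unitarymx. Qed.

Let PCP : P^t* *m P = 1%:M.
Proof. by rewrite -invmx_unitary ?spectral_unitarymx ?mulVmx ?spectral_unit. Qed.

Let MtoC_spectral : MtoC M = P^t* *m diag_mx D *m P.
Proof.
have /orthomx_spectralP -> : MtoC M \is normalmx.
  by apply/normalmxP; rewrite trmxC_MtoC M_sym.
by rewrite invmx_unitary ?spectral_unitarymx.
Qed.

Lemma perm_spectral_diag : perm_eq [seq D 0 k | k <- enum 'I_d] (map toC s).
Proof.
apply: prod_XsubC_eq; rewrite enumT !big_map -(map_prod_XsubC toC) -M_eig.1.
rewrite map_char_poly MtoC_spectral char_poly_similar // char_poly_trig ?diag_mx_is_trig //.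
by apply: eq_bigr => k _; rewrite mxE eqxx mulr1n.
Qed.

Let w := P *m MtoC v.

Let spectral_diag_w k : D 0 k * w k 0 = toC s`_0 * w k 0.
Proof.
have PM : P *m MtoC M = diag_mx D *m P by rewrite MtoC_spectral !mulmxA PPC mul1mx.
have : diag_mx D *m w = toC s`_0 *: w.
  by rewrite /w mulmxA -PM -mulmxA -map_mxM Mv map_mxZ scalemxAr.
by move/matrixP/(_ k 0); rewrite mul_diag_mx !mxE.
Qed.

Let trmxC_w : w^t* = (MtoC v)^T *m P^t*.
Proof. by rewrite /w trmx_mul map_mxM trmxC_MtoC map_trmx. Qed.

Let w_unit : (w^t* *m w) 0 0 = 1.
Proof.
rewrite trmxC_w /w mulmxA -[_ *m P^t* *m P]mulmxA PCP mulmx1 mxE -(rmorph1 toC) -v_unit.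
by rewrite rmorph_sum; apply: eq_bigr => i _; rewrite !mxE rmorphXn expr2.
Qed.

(* As s`_0 is a simple eigenvalue, the eigenvector w = P v lives on a single
   coordinate k0. *)
Let top_spectral_index : exists k0, [/\ D 0 k0 = toC s`_0,
  forall k, k != k0 -> w k 0 = 0 & forall k, k != k0 -> D 0 k <= toC s`_1].
Proof.
have [k0 wk0] : exists k0, w k0 0 != 0.
  case: (pickP (fun k => w k 0 != 0)) => [k0 wk0 | w0]; first by exists k0.
  move: w_unit; rewrite mxE big1 => [/eqP|k _]; first by rewrite eq_sym oner_eq0.
  by move/negbFE/eqP: (w0 k) => ->; rewrite mulr0.
have Dk0 : D 0 k0 = toC s`_0 by apply: (mulIf wk0); rewrite spectral_diag_w.
have D_neq k : k != k0 -> D 0 k != toC s`_0.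
  move=> kk0; apply/eqP => Dk.
  have := permP perm_spectral_diag (pred1 (toC s`_0)).
  rewrite count_map [in RHS]count_map (@eq_count _ _ (pred1 s`_0)); last first.
    by move=> x; rewrite /= (inj_eq (@complexI R)).
  rewrite count_head_sorted ?M_eig.2 // -sum1_count enumT.
  rewrite (bigD1 k0) /=; last by rewrite Dk0.
  rewrite (bigD1 k) /=; last by rewrite Dk eqxx.
  by move/eqP.
exists k0; split => // k kk0.
  have := spectral_diag_w k; move/eqP; rewrite -subr_eq0 -mulrBl mulf_eq0 subr_eq0.
  by rewrite (negbTE (D_neq k kk0)) => /eqP.
have /mapP [y ys Dy] : D 0 k \in map toC s.
  by rewrite -(perm_mem perm_spectral_diag) map_f ?mem_enum.
rewrite Dy lecR mem_sorted_le_second //; first exact: M_eig.2.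
by apply: contra_neq (D_neq k kk0) => <-.
Qed.

Lemma mxtrace_mul_le_top_eigen (W : 'M[R]_d) : psd W ->
  \tr (M *m W) <=
    s`_0 * (v^T *m W *m v) 0 0 + s`_1 * (\tr W - (v^T *m W *m v) 0 0).
Proof.
move=> W_psd; have [k0 [Dk0 w_k D_le]] := top_spectral_index.
pose G := P *m MtoC W *m P^t*.
have trMW : toC (\tr (M *m W)) = \sum_k D 0 k * G k k.
  rewrite -mxtrace_MtoC map_mxM MtoC_spectral -!mulmxA mxtrace_mulC -mulmxA /mxtrace.
  by apply: eq_bigr => k _; rewrite mul_diag_mx mxE.
have trW : toC (\tr W) = \sum_k G k k.
  by rewrite -mxtrace_MtoC -[MtoC W]mul1mx -PCP -mulmxA mxtrace_mulC.
have alpha : toC ((v^T *m W *m v) 0 0) = G k0 k0.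
  have -> : toC ((v^T *m W *m v) 0 0) = (w^t* *m G *m w) 0 0.
    rewrite trmxC_w /G /w !mulmxA -[_ *m P^t* *m P]mulmxA PCP mulmx1.
    by rewrite -[_ *m P^t* *m P]mulmxA PCP mulmx1 map_trmx -!map_mxM [RHS]mxE.
  by rewrite (form_single_support _ w_k) w_unit mulr1.
suff : toC (\tr (M *m W)) <= toC s`_0 * toC ((v^T *m W *m v) 0 0) +
    toC s`_1 * (toC (\tr W) - toC ((v^T *m W *m v) 0 0)).
  by rewrite -rmorphB -!rmorphM -rmorphD lecR.
rewrite trMW trW alpha.
rewrite (bigD1 k0) // [X in _ <= _ + _ * (X - _)](bigD1 k0) //= Dk0 [G k0 k0 + _]addrC addrK.
rewrite lerD2l mulr_sumr; apply: ler_sum => k kk0.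
by rewrite ler_wpM2r ?psd_conj_MtoC_diag_ge0 ?D_le.
Qed.

End TopEigenvector.

Lemma mxtrace_mul_le_mxnorm1 (R : realDomainType) d (E X : 'M[R]_d) (a : R) :
  (forall i j, `|E i j| <= a) -> \tr (E *m X) <= a * mxnorm1 X.
Proof.
move=> E_le; rewrite /mxnorm1 exchange_big mulr_sumr; apply: ler_sum => j _.
rewrite mxE mulr_sumr; apply: ler_sum => i _.
by apply: le_trans (ler_norm _) _; rewrite normrM ler_wpM2r.
Qed.

Lemma le_add_sqrt_of_sqr_le (R : rcfType) (x r : R) :
  0 <= x -> 0 <= r -> x ^+ 2 <= r * (1 + x) -> x <= r + Num.sqrt r.
Proof.
move=> x_ge0 r_ge0; have t_ge0 := sqrtr_ge0 r; have := sqr_sqrtr r_ge0.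
move: (Num.sqrt r) t_ge0 => t t_ge0 <-; nra.
Qed.

Theorem proposition7 (R : rcfType) (n d k : nat) (a : R)
    (B : 'M[R]_(n, d)) (E : 'M[R]_d) (v : 'cV[R]_d) (s : seq R) (W : 'M[R]_d) :
  (2 <= d)%N ->
  symmx E ->
  (forall i j, `|E i j| <= a) ->
  sorted_eigenvalues (B^T *m B) s ->
  (B^T *m B) *m v = s`_0 *: v ->
  sqnorm v = 1 ->
  ksparse k v ->
  s`_0 - s`_1 > 0 ->
  optimal k (B^T *m B + E) W ->
  frob (W - v *m v^T) <=
    2 * a * k%:R / (s`_0 - s`_1) + Num.sqrt (2 * a * k%:R / (s`_0 - s`_1)).
Proof.
move=> d_ge2 _ E_le M_eig Mv v_unit v_sparse gap [[trW [W_l1 W_psd]] W_opt].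
set M := B^T *m B in M_eig Mv W_opt *; set V := v *m v^T; set D := W - V.
set al := (v^T *m W *m v) 0 0; set g := s`_0 - s`_1 in gap *.
have M_sym : M^T = M by rewrite /M trmx_mul trmxK.
have top : \tr (M *m W) <= s`_0 * al + s`_1 * (1 - al).
  by rewrite -trW mxtrace_mul_le_top_eigen // -subr_gt0.
have trMV : \tr (M *m V) = s`_0.
  by rewrite mxtrace_mul_outer -mulmxA Mv -scalemxAr mxE -sqnormE v_unit mulr1.
have gap_le : g * (1 - al) <= a * mxnorm1 D.
  apply: le_trans (mxtrace_mul_le_mxnorm1 _ E_le).
  have := W_opt V (feasible_outer v_sparse v_unit).
  rewrite /D mulmxBr linearB /= !mulmxDl !mxtraceD trMV /g; lra.
have a_ge0 : 0 <= a.
  have i0 : 'I_d := Ordinal (leq_trans (isT : 0 < 2)%N d_ge2).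
  exact: le_trans (normr_ge0 _) (E_le i0 i0).
have D_fro : sqfrob D <= 2 * (1 - al) := sqfrob_sub_outer_le W_psd trW v_unit.
have D_l1 : mxnorm1 D <= k%:R + k%:R * frob D := mxnorm1_sub_outer_le v_sparse W_l1.
apply: le_add_sqrt_of_sqr_le; first exact: sqrtr_ge0.
  by rewrite divr_ge0 ?mulr_ge0 ?ler0n // ltW.
rewrite mulrAC ler_pdivlMr // sqr_frob.
have := ler_wpM2r (ltW gap) D_fro; have := ler_wpM2l a_ge0 D_l1.
lra.
Qed.
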